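(* If a sequent without stoups (i.e. all of whose stoups are empty) is derivable in $\mathcal{M}_{2018}$, then it is also derivable in $\mathcal{F}_{2018}$.
   Context: Formulae are built from a countable set of variables and $\mathbf1$ by $\backslash,/,\cdot,\wedge,\vee$ and the unary $\langle\rangle$, $[]^{-1}$, $!$. A stoup is a finite multiset of formulae ($\varnothing$ empty); a tree term is a formula or $[\Xi]$; a meta-formula is $\zeta;\Gamma$ ($\zeta$ a stoup, $\Gamma$ a finite sequence of tree terms, empty $\Lambda$), $\varnothing;\Gamma$ written $\Gamma$; comma is concatenation / multiset union; sequents $\Xi\to C$; $\Xi(\Theta)$ designates an occurrence of a meta-formula $\Theta$ which is $\Xi$ itself or the content of a bracket $[\Theta]$ at any depth. Rules of $\mathcal{M}_{2018}$ (Morrill's calculus; no cut rule): axioms $A\to A$, $\Lambda\to\mathbf1$; ($/L$) from $\zeta_1;\Gamma\to B$ and $\Xi(\zeta_2;\Delta_1,C,\Delta_2)\to D$ infer $\Xi(\zeta_1,\zeta_2;\Delta_1,C/B,\Gamma,\Delta_2)\to D$; ($/R$) from $\zeta;\Gamma,B\to C$ infer $\zeta;\Gamma\to C/B$; ($\backslash L$) from $\zeta_1;\Gamma\to A$ and $\Xi(\zeta_2;\Delta_1,C,\Delta_2)\to D$ infer $\Xi(\zeta_1,\zeta_2;\Delta_1,\Gamma,A\backslash C,\Delta_2)\to D$; ($\backslash R$) from $\zeta;A,\Gamma\to C$ infer $\zeta;\Gamma\to A\backslash C$; ($\cdot L$) from $\Xi(\zeta;\Delta_1,A,B,\Delta_2)\to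 D$ infer $\Xi(\zeta;\Delta_1,A\cdot B,\Delta_2)\to D$; ($\cdot R$) from $\zeta_1;\Delta\to A$, $\zeta_2;\Gamma\to B$ infer $\zeta_1,\zeta_2;\Delta,\Gamma\to A\cdot B$; ($\mathbf1L$) from $\Xi(\zeta;\Delta_1,\Delta_2)\to A$ infer $\Xi(\zeta;\Delta_1,\mathbf1,\Delta_2)\to A$; ($\vee L$) from $\Xi(\zeta;\Delta_1,A_1,\Delta_2)\to C$ and $\Xi(\zeta;\Delta_1,A_2,\Delta_2)\to C$ infer $\Xi(\zeta;\Delta_1,A_1\vee A_2,\Delta_2)\to C$; ($\vee R_i$) from $\Xi\to A_i$ infer $\Xi\to A_1\vee A_2$; ($\wedge L_i$) from $\Xi(\zeta;\Delta_1,A_i,\Delta_2)\to C$ infer $\Xi(\zeta;\Delta_1,A_1\wedge A_2,\Delta_2)\to C$; ($\wedge R$) from $\Xi\to A_1$ and $\Xi\to A_2$ infer $\Xi\to A_1\wedge A_2$; ($[]^{-1}L$) from $\Xi(\zeta;\Delta_1,A,\Delta_2)\to B$ infer $\Xi(\zeta;\Delta_1,[[]^{-1}A],\Delta_2)\to B$; ($[]^{-1}R$) from $[\Xi]\to A$ infer $\Xi\to[]^{-1}A$; ($\langle\rangle L$) from $\Xi(\zeta;\Delta_1,[A],\Delta_2)\to B$ infer $\Xi(\zeta;\Delta_1,\langle\rangle A,\Delta_2)\to B$; ($\langle\rangle R$) from $\Xi\to A$ infer $[\Xi]\to\langle\rangle A$; ($!L$) from $\Xi(\zeta,A;\Gamma_1,\Gamma_2)\to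 B$ infer $\Xi(\zeta;\Gamma_1,!A,\Gamma_2)\to B$; ($!P$) from $\Xi(\zeta;\Gamma_1,A,\Gamma_2)\to B$ infer $\Xi(\zeta,A;\Gamma_1,\Gamma_2)\to B$; ($!R$) from $!A\to B$ infer $!A\to!B$; ($!C$) from $\Xi(\zeta,A;\Gamma_1,[A;\Gamma_2],\Gamma_3)\to B$ infer $\Xi(\zeta,A;\Gamma_1,[[\Gamma_2]],\Gamma_3)\to B$. Stoup-free calculus $\mathcal{F}_{2018}$: meta-formulae are finite sequences of tree terms; rules are the stoup-free versions of the rules above other than $!L,!P,!R,!C$ (drop all stoups), together with ($!L$) from $\Xi(\Delta_1,A,\Delta_2)\to C$ infer $\Xi(\Delta_1,!A,\Delta_2)\to C$; ($!P_1$) from $\Xi(\Delta_1,!A,\Phi,\Delta_2)\to C$ infer $\Xi(\Delta_1,\Phi,!A,\Delta_2)\to C$; ($!P_2$) the converse; ($!R$) from $!A\to B$ infer $!A\to!B$; ($!C$) from $\Xi(!A,\Gamma_1,[!A,\Gamma_2],\Gamma_3)\to C$ infer $\Xi(!A,\Gamma_1,[[\Gamma_2]],\Gamma_3)\to C$; and the cut rule: from $\Pi\to A$ and $\Xi(\Gamma_1,A,\Gamma_2)\to C$ infer $\Xi(\Gamma_1,\Pi,\Gamma_2)\to C$. *)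

From Stdlib Require Import List Permutation.
Import ListNotations.
Set Implicit Arguments.

Inductive form : Type :=
| Var   : nat -> form
| One   : form
| Under : form -> form -> form   (* Under A C  =  A \ C *)
| Over  : form -> form -> form   (* Over C B   =  C / B *)
| Prod  : form -> form -> form
| Meet  : form -> form -> form
| Join  : form -> form -> form
| Diam  : form -> form
| BInv  : form -> form
| Bang  : form -> form.

(* A stoup is a finite multiset of formulae, represented by a list; lists
   that are permutations of each other denote the same stoup (see [meq] and
   the rule [M_stoup_perm] below).  A tree term is a formula or a bracketed
   meta-formula [z ; G]. *)
Definition stoup := list form.

Inductive tterm : Type :=
| TF : form -> tterm
| TB : stoup -> list tterm -> tterm.

Definition mform : Type := (stoup * list tterm)%type.

Inductive teq : tterm -> tterm -> Prop :=
| teq_F : forall A, teq (TF A) (TF A)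
| teq_B : forall z z' G G', Permutation z z' -> Forall2 teq G G' ->
    teq (TB z G) (TB z' G').

Definition meq (m m' : mform) : Prop :=
  Permutation (fst m) (fst m') /\ Forall2 teq (snd m) (snd m').

(* Contexts Xi( ) : the hole is Xi itself or the content of a bracket at
   any depth. *)
Inductive mctx : Type :=
| MHole : mctx
| MIn : stoup -> list tterm -> mctx -> list tterm -> mctx.

Fixpoint mplug (c : mctx) (m : mform) : mform :=
  match c with
  | MHole => m
  | MIn z G1 c' G2 => (z, G1 ++ [TB (fst (mplug c' m)) (snd (mplug c' m))] ++ G2)
  end.

Inductive derM : mform -> form -> Prop :=
| M_ax : forall A, derM ([], [TF A]) A
| M_oneR : derM ([], []) One
| M_overL : forall c z1 z2 G D1 D2 B C D,
    derM (z1, G) B ->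
    derM (mplug c (z2, D1 ++ [TF C] ++ D2)) D ->
    derM (mplug c (z1 ++ z2, D1 ++ [TF (Over C B)] ++ G ++ D2)) D
| M_overR : forall z G B C,
    derM (z, G ++ [TF B]) C -> derM (z, G) (Over C B)
| M_underL : forall c z1 z2 G D1 D2 A C D,
    derM (z1, G) A ->
    derM (mplug c (z2, D1 ++ [TF C] ++ D2)) D ->
    derM (mplug c (z1 ++ z2, D1 ++ G ++ [TF (Under A C)] ++ D2)) D
| M_underR : forall z G A C,
    derM (z, TF A :: G) C -> derM (z, G) (Under A C)
| M_prodL : forall c z D1 D2 A B D,
    derM (mplug c (z, D1 ++ [TF A; TF B] ++ D2)) D ->
    derM (mplug c (z, D1 ++ [TF (Prod A B)] ++ D2)) D
| M_prodR : forall z1 z2 D G A B,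
    derM (z1, D) A -> derM (z2, G) B -> derM (z1 ++ z2, D ++ G) (Prod A B)
| M_oneL : forall c z D1 D2 A,
    derM (mplug c (z, D1 ++ D2)) A ->
    derM (mplug c (z, D1 ++ [TF One] ++ D2)) A
| M_joinL : forall c z D1 D2 A1 A2 C,
    derM (mplug c (z, D1 ++ [TF A1] ++ D2)) C ->
    derM (mplug c (z, D1 ++ [TF A2] ++ D2)) C ->
    derM (mplug c (z, D1 ++ [TF (Join A1 A2)] ++ D2)) C
| M_joinR1 : forall m A1 A2, derM m A1 -> derM m (Join A1 A2)
| M_joinR2 : forall m A1 A2, derM m A2 -> derM m (Join A1 A2)
| M_meetL1 : forall c z D1 D2 A1 A2 C,
    derM (mplug c (z, D1 ++ [TF A1] ++ D2)) C ->
    derM (mplug c (z, D1 ++ [TF (Meet A1 A2)] ++ D2)) C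
| M_meetL2 : forall c z D1 D2 A1 A2 C,
    derM (mplug c (z, D1 ++ [TF A2] ++ D2)) C ->
    derM (mplug c (z, D1 ++ [TF (Meet A1 A2)] ++ D2)) C
| M_meetR : forall m A1 A2, derM m A1 -> derM m A2 -> derM m (Meet A1 A2)
| M_binvL : forall c z D1 D2 A B,
    derM (mplug c (z, D1 ++ [TF A] ++ D2)) B ->
    derM (mplug c (z, D1 ++ [TB [] [TF (BInv A)]] ++ D2)) B
| M_binvR : forall z G A,
    derM ([], [TB z G]) A -> derM (z, G) (BInv A)
| M_diamL : forall c z D1 D2 A B,
    derM (mplug c (z, D1 ++ [TB [] [TF A]] ++ D2)) B ->
    derM (mplug c (z, D1 ++ [TF (Diam A)] ++ D2)) B
| M_diamR : forall z G A,
    derM (z, G) A -> derM ([], [TB z G]) (Diam A)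
| M_bangL : forall c z G1 G2 A B,
    derM (mplug c (z ++ [A], G1 ++ G2)) B ->
    derM (mplug c (z, G1 ++ [TF (Bang A)] ++ G2)) B
| M_bangP : forall c z G1 G2 A B,
    derM (mplug c (z, G1 ++ [TF A] ++ G2)) B ->
    derM (mplug c (z ++ [A], G1 ++ G2)) B
| M_bangR : forall A B,
    derM ([], [TF (Bang A)]) B -> derM ([], [TF (Bang A)]) (Bang B)
| M_bangC : forall c z G1 G2 G3 A B,
    derM (mplug c (z ++ [A], G1 ++ [TB [A] G2] ++ G3)) B ->
    derM (mplug c (z ++ [A], G1 ++ [TB [] [TB [] G2]] ++ G3)) B
(* stoups are multisets: sequents equal up to reordering of stoups (at any
   depth) are identified *)
| M_stoup_perm : forall m m' C, meq m m' -> derM m C -> derM m' C.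

Inductive fterm : Type :=
| FF : form -> fterm
| FB : list fterm -> fterm.

Inductive fctx : Type :=
| FHole : fctx
| FIn : list fterm -> fctx -> list fterm -> fctx.

Fixpoint fplug (c : fctx) (G : list fterm) : list fterm :=
  match c with
  | FHole => G
  | FIn G1 c' G2 => G1 ++ [FB (fplug c' G)] ++ G2
  end.

Inductive derF : list fterm -> form -> Prop :=
| F_ax : forall A, derF [FF A] A
| F_oneR : derF [] One
| F_overL : forall c G D1 D2 B C D,
    derF G B -> derF (fplug c (D1 ++ [FF C] ++ D2)) D ->
    derF (fplug c (D1 ++ [FF (Over C B)] ++ G ++ D2)) D
| F_overR : forall G B C, derF (G ++ [FF B]) C -> derF G (Over C B)
| F_underL : forall c G D1 D2 A C D,
    derF G A -> derF (fplug c (D1 ++ [FF C] ++ D2)) D ->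
    derF (fplug c (D1 ++ G ++ [FF (Under A C)] ++ D2)) D
| F_underR : forall G A C, derF (FF A :: G) C -> derF G (Under A C)
| F_prodL : forall c D1 D2 A B D,
    derF (fplug c (D1 ++ [FF A; FF B] ++ D2)) D ->
    derF (fplug c (D1 ++ [FF (Prod A B)] ++ D2)) D
| F_prodR : forall D G A B, derF D A -> derF G B -> derF (D ++ G) (Prod A B)
| F_oneL : forall c D1 D2 A,
    derF (fplug c (D1 ++ D2)) A -> derF (fplug c (D1 ++ [FF One] ++ D2)) A
| F_joinL : forall c D1 D2 A1 A2 C,
    derF (fplug c (D1 ++ [FF A1] ++ D2)) C ->
    derF (fplug c (D1 ++ [FF A2] ++ D2)) C ->
    derF (fplug c (D1 ++ [FF (Join A1 A2)] ++ D2)) C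
| F_joinR1 : forall G A1 A2, derF G A1 -> derF G (Join A1 A2)
| F_joinR2 : forall G A1 A2, derF G A2 -> derF G (Join A1 A2)
| F_meetL1 : forall c D1 D2 A1 A2 C,
    derF (fplug c (D1 ++ [FF A1] ++ D2)) C ->
    derF (fplug c (D1 ++ [FF (Meet A1 A2)] ++ D2)) C
| F_meetL2 : forall c D1 D2 A1 A2 C,
    derF (fplug c (D1 ++ [FF A2] ++ D2)) C ->
    derF (fplug c (D1 ++ [FF (Meet A1 A2)] ++ D2)) C
| F_meetR : forall G A1 A2, derF G A1 -> derF G A2 -> derF G (Meet A1 A2)
| F_binvL : forall c D1 D2 A B,
    derF (fplug c (D1 ++ [FF A] ++ D2)) B ->
    derF (fplug c (D1 ++ [FB [FF (BInv A)]] ++ D2)) B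
| F_binvR : forall G A, derF [FB G] A -> derF G (BInv A)
| F_diamL : forall c D1 D2 A B,
    derF (fplug c (D1 ++ [FB [FF A]] ++ D2)) B ->
    derF (fplug c (D1 ++ [FF (Diam A)] ++ D2)) B
| F_diamR : forall G A, derF G A -> derF [FB G] (Diam A)
| F_bangL : forall c D1 D2 A C,
    derF (fplug c (D1 ++ [FF A] ++ D2)) C ->
    derF (fplug c (D1 ++ [FF (Bang A)] ++ D2)) C
| F_bangP1 : forall c D1 P D2 A C,
    derF (fplug c (D1 ++ [FF (Bang A)] ++ P ++ D2)) C ->
    derF (fplug c (D1 ++ P ++ [FF (Bang A)] ++ D2)) C
| F_bangP2 : forall c D1 P D2 A C,
    derF (fplug c (D1 ++ P ++ [FF (Bang A)] ++ D2)) C ->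
    derF (fplug c (D1 ++ [FF (Bang A)] ++ P ++ D2)) C
| F_bangR : forall A B, derF [FF (Bang A)] B -> derF [FF (Bang A)] (Bang B)
| F_bangC : forall c G1 G2 G3 A C,
    derF (fplug c (FF (Bang A) :: G1 ++ [FB (FF (Bang A) :: G2)] ++ G3)) C ->
    derF (fplug c (FF (Bang A) :: G1 ++ [FB [FB G2]] ++ G3)) C
| F_cut : forall c P G1 G2 A C,
    derF P A -> derF (fplug c (G1 ++ [FF A] ++ G2)) C ->
    derF (fplug c (G1 ++ P ++ G2)) C.

Inductive stoup_free : tterm -> Prop :=
| sf_F : forall A, stoup_free (TF A)
| sf_B : forall G, Forall stoup_free G -> stoup_free (TB [] G).

Fixpoint erase (t : tterm) : fterm :=
  match t with
  | TF A => FF A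
  | TB _ G => FB (map erase G)
  end.

From Stdlib Require Import List Permutation.
Import ListNotations.

(* Each stoup formula A becomes the banged formula !A, placed in front of the
   tree terms of its meta-formula.  The rules !P1/!P2 of F_2018 let a block of
   banged formulae travel freely through a configuration, so every rule of
   M_2018 becomes a rule of F_2018 up to such moves (and multiset equality of
   stoups becomes a permutation of banged formulae).  On stoup-free sequents the
   translation is just the erasure of the empty stoups. *)

Notation bangs z := (map (fun A => FF (Bang A)) z).

Fixpoint tr_tterm (t : tterm) : fterm :=
  match t with
  | TF A => FF A
  | TB z G => FB (bangs z ++ map tr_tterm G)
  end.

Definition tr_mform (m : mform) : list fterm :=
  bangs (fst m) ++ map tr_tterm (snd m).

Fixpoint tr_mctx (c : mctx) : fctx :=
  match c with
  | MHole => FHole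
  | MIn z G1 c' G2 =>
      FIn (bangs z ++ map tr_tterm G1) (tr_mctx c') (map tr_tterm G2)
  end.

Ltac simpl_lists := repeat (simpl in *; rewrite ?map_app, <- ?app_assoc in *).

Lemma tr_mplug (c : mctx) (m : mform) :
  tr_mform (mplug c m) = fplug (tr_mctx c) (tr_mform m).
Proof.
  induction c as [|z G1 c IHc G2]; simpl; auto.
  unfold tr_mform in *; simpl_lists. rewrite <- IHc. reflexivity.
Qed.

Fixpoint fctx_comp (c d : fctx) : fctx :=
  match c with
  | FHole => d
  | FIn G1 c' G2 => FIn G1 (fctx_comp c' d) G2
  end.

Lemma fplug_comp (c d : fctx) (G : list fterm) :
  fplug (fctx_comp c d) G = fplug c (fplug d G).
Proof. induction c; simpl; congruence. Qed.

Lemma derF_bangs_exchange (c : fctx) (z : list form) (X P W : list fterm) (C : form) :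
  derF (fplug c (X ++ bangs z ++ P ++ W)) C <->
  derF (fplug c (X ++ P ++ bangs z ++ W)) C.
Proof.
  revert X; induction z as [|A z IHz]; intros X; simpl; [tauto|].
  specialize (IHz (X ++ [FF (Bang A)])); simpl_lists.
  split; intros HD.
  - apply F_bangP1. simpl_lists. apply IHz, HD.
  - apply IHz. apply F_bangP2 in HD. simpl_lists. exact HD.
Qed.

Lemma derF_bangs_perm {z z' : list form} : Permutation z z' ->
  forall c X Y C, derF (fplug c (X ++ bangs z ++ Y)) C ->
                  derF (fplug c (X ++ bangs z' ++ Y)) C.
Proof.
  induction 1 as [|A z z' _ IH|A B z|z z' z'' _ IH1 _ IH2]; intros c X Y C HD; auto.
  - specialize (IH c (X ++ [FF (Bang A)]) Y C). simpl_lists. auto.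
  - apply (derF_bangs_exchange c [B] X [FF (Bang A)]). exact HD.
Qed.

Definition tr_replaceable (t t' : tterm) : Prop :=
  forall c X Y C, derF (fplug c (X ++ tr_tterm t :: Y)) C ->
                  derF (fplug c (X ++ tr_tterm t' :: Y)) C.

Lemma derF_tr_replace_list {G G' : list tterm} : Forall2 tr_replaceable G G' ->
  forall c X Y C, derF (fplug c (X ++ map tr_tterm G ++ Y)) C ->
                  derF (fplug c (X ++ map tr_tterm G' ++ Y)) C.
Proof.
  induction 1 as [|t t' G G' Ht _ IH]; intros c X Y C HD; simpl in *; auto.
  apply Ht in HD. specialize (IH c (X ++ [tr_tterm t']) Y C). simpl_lists. auto.
Qed.

Lemma derF_tr_replace {z z' : list form} {G G' : list tterm} :
  Permutation z z' -> Forall2 tr_replaceable G G' ->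
  forall c C, derF (fplug c (bangs z ++ map tr_tterm G)) C ->
              derF (fplug c (bangs z' ++ map tr_tterm G')) C.
Proof.
  intros Hz HG c C HD.
  rewrite <- (app_nil_r (map tr_tterm G)) in HD.
  rewrite <- (app_nil_r (map tr_tterm G')).
  apply (derF_bangs_perm Hz c []) in HD.
  apply (derF_tr_replace_list HG c (bangs z')), HD.
Qed.

Lemma teq_tr_replaceable (t t' : tterm) : teq t t' -> tr_replaceable t t'.
Proof.
  revert t t'; fix IH 3; intros t t' [A|z z' G G' Hz HG]; [unfold tr_replaceable; auto|].
  assert (HG' : Forall2 tr_replaceable G G').
  { induction HG; constructor; auto. }
  intros c X Y C HD. simpl in *.
  pose (d := fctx_comp c (FIn X FHole Y)).
  assert (Hd : forall W, fplug c (X ++ FB W :: Y) = fplug d W).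
  { intros W. unfold d. rewrite fplug_comp. reflexivity. }
  rewrite Hd in *. exact (derF_tr_replace Hz HG' d C HD).
Qed.

Lemma derF_tr_meq (m m' : mform) (C : form) :
  meq m m' -> derF (tr_mform m) C -> derF (tr_mform m') C.
Proof.
  intros [Hz HG].
  exact (derF_tr_replace Hz (Forall2_impl _ teq_tr_replaceable HG) FHole C).
Qed.

Lemma derM_derF_tr (m : mform) (C : form) : derM m C -> derF (tr_mform m) C.
Proof.
  induction 1; rewrite ?tr_mplug in *; unfold tr_mform in *; simpl_lists.
  (* this also settles !L, whose translation is a single !P1 move *)
  all: try solve [constructor; assumption].
  all: try solve [rewrite app_assoc;
                  (apply F_prodL + apply F_oneL + apply F_joinL + apply F_meetL1
                   + apply F_meetL2 + apply F_binvL + apply F_diamL);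
                  simpl_lists; assumption].
  - pose proof (@F_overL (tr_mctx c) _ (bangs z2 ++ map tr_tterm D1) (map tr_tterm D2)
                  _ C D IHderM1) as HR.
    pose proof (derF_bangs_exchange (tr_mctx c) z1 []
                  (bangs z2 ++ map tr_tterm D1 ++ [FF (Over C B)])
                  (map tr_tterm G ++ map tr_tterm D2) D) as Hex.
    simpl_lists. apply Hex, HR, IHderM2.
  - apply F_overR. simpl_lists. exact IHderM.
  - pose proof (@F_underL (tr_mctx c) _ (bangs z2 ++ map tr_tterm D1) (map tr_tterm D2)
                  _ C D IHderM1) as HR.
    pose proof (derF_bangs_exchange (tr_mctx c) z1 [] (bangs z2 ++ map tr_tterm D1)
                  (map tr_tterm G ++ FF (Under A C) :: map tr_tterm D2) D) as Hex.
    simpl_lists. apply Hex, HR, IHderM2.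
  - apply F_underR.
    pose proof (derF_bangs_exchange FHole z [] [FF A] (map tr_tterm G) C) as Hex.
    simpl_lists. apply Hex, IHderM.
  - pose proof (derF_bangs_exchange FHole z2 (bangs z1) (map tr_tterm D) (map tr_tterm G)
                  (Prod A B)) as Hex.
    simpl_lists. apply Hex. rewrite app_assoc. apply F_prodR; assumption.
  - pose proof (derF_bangs_exchange (tr_mctx c) [A] (bangs z) (map tr_tterm G1)
                  (map tr_tterm G2) B) as Hex.
    pose proof (F_bangL (tr_mctx c) (bangs z ++ map tr_tterm G1) (map tr_tterm G2) A
                  (C := B)) as HR.
    simpl_lists. apply Hex, HR, IHderM.
  - (* F_bangC needs !A at the very front: move it there, contract, move it back *)
    pose proof (fun G2' => derF_bangs_exchange (tr_mctx c) [A] [] (bangs z)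
                  (map tr_tterm G1 ++ FB G2' :: map tr_tterm G3) B) as Hex.
    pose proof (F_bangC (tr_mctx c) (bangs z ++ map tr_tterm G1) (map tr_tterm G2)
                  (map tr_tterm G3) A (C := B)) as HR.
    simpl_lists. apply Hex, HR, Hex, IHderM.
  - exact (derF_tr_meq _ _ _ H IHderM).
Qed.

Lemma tr_tterm_stoup_free (t : tterm) : stoup_free t -> tr_tterm t = erase t.
Proof.
  revert t; fix IH 2; intros t [A|G HG]; simpl; f_equal.
  induction HG; simpl; f_equal; auto.
Qed.

Theorem proposition3 : forall (G : list tterm) (C : form),
  Forall stoup_free G ->
  derM ([], G) C ->
  derF (map erase G) C.
Proof.
  intros G C HG HD.
  replace (map erase G) with (map tr_tterm G).
  - exact (derM_derF_tr _ _ HD).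
  - apply map_ext_Forall. eapply Forall_impl; [|exact HG]. exact tr_tterm_stoup_free.
Qed.
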